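(* Let $N\ge1$ and $1\le m\le N$ be integers and let $D_{N,m}=|D_{N,m}\rangle\langle D_{N,m}|$. Then $C_S(D_{N,m})\ge N-2m+1$.
   Context: The Dicke state is $|D_{N,m}\rangle=\binom{N}{m}^{-1/2}\sum_\pi|0\rangle^{\otimes(N-m)}|1\rangle^{\otimes m}$, the normalized uniform superposition of all $N$-bit computational basis states of Hamming weight $m$. $\mathbb{I},\sigma_X,\sigma_Y,\sigma_Z$ are the identity and Pauli matrices. The notation $\sum_\pi \mathbb{I}^{\otimes j}\otimes A^{\otimes (N-j)}$ denotes the sum, over all distinct placements, of tensor products in which exactly $j$ of the $N$ factors are $\mathbb{I}$ and the other $N-j$ are $A$ (each distinct arrangement counted once). Measurement complexity: for an $N$-qubit permutation-invariant operator $\rho$, $C_S(\rho)$ is the minimal $n_A$ such that there exist real $b_i,c_i,d_i$ and real $\alpha_{ij}$ ($1\le i\le n_A$, $0\le j\le N$) with $\rho=\sum_{i=1}^{n_A}\sum_{j=0}^{N}\alpha_{ij}\sum_\pi\mathbb{I}^{\otimes j}\otimes A_i^{\otimes(N-j)}$, $A_i=b_i\sigma_X+c_i\sigma_Y+d_i\sigma_Z$. *)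

(* N-qubit operators are represented by their matrix entries
   in the computational basis, indexed by bit strings x : {ffun 'I_N -> 'I_2}. *)
From HB Require Import structures.
From mathcomp Require Import all_boot all_order all_algebra all_field.
Unset Printing Implicit Defensive.
Import Order.TTheory GRing.Theory Num.Theory.
Local Open Scope ring_scope.

Definition basis (N : nat) := {ffun 'I_N -> 'I_2}.

Definition qop (N : nat) := basis N -> basis N -> algC.

Definition sigmaX : 'M[algC]_2 := \matrix_(i < 2, j < 2) (if i != j then 1 else 0).
Definition sigmaY : 'M[algC]_2 :=
  \matrix_(i < 2, j < 2)
    (if (val i == 0%N) && (val j == 1%N) then - 'i
     else if (val i == 1%N) && (val j == 0%N) then 'i else 0).
Definition sigmaZ : 'M[algC]_2 :=
  \matrix_(i < 2, j < 2) (if i == j then (if val i == 0%N then 1 else -1) else 0).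

Definition pauli_comb (b c d : algC) : 'M[algC]_2 :=
  b *: sigmaX + c *: sigmaY + d *: sigmaZ.

Definition tensor (N : nat) (A : 'I_N -> 'M[algC]_2) : qop N :=
  fun x y => \prod_(k < N) A k (x k) (y k).

(* sum_pi I^{(x) j} (x) A^{(x) (N-j)} : sum over all placements of j identities *)
Definition sym_sum (N j : nat) (A : 'M[algC]_2) : qop N :=
  fun x y => \sum_(S : {set 'I_N} | #|S| == j)
               tensor N (fun k => if k \in S then 1%:M else A) x y.

Definition hweight {N : nat} (x : basis N) : nat := #|[set k | x k == 1 :> nat]|.

Definition dicke_vec (N m : nat) (x : basis N) : algC :=
  if hweight x == m then (sqrtC ('C(N, m))%:R)^-1 else 0.

Definition dicke_proj (N m : nat) : qop N :=
  fun x y => dicke_vec N m x * (dicke_vec N m y)^*.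

From HB Require Import structures.
From mathcomp Require Import all_boot all_order all_algebra all_field.
From mathcomp Require Import zify ring.
Import Order.TTheory GRing.Theory Num.Theory.
Local Open Scope ring_scope.

(* Idea: send an N-qubit operator O to the generating polynomial
     Lam O = sum_{x,y} O x y * prod_k zeta (x k) (y k),
   where zeta u u = (-1)^u and zeta u v = 'X for u <> v.  Lam is linear and
   multiplicative on tensor products, with single-qubit value
   evA A = (A00 - A11) + (A01 + A10) 'X.  Hence evA 1 = 0 and
   evA (b sX + c sY + d sZ) = 2d + 2b 'X, so a decomposition of rho with n
   Pauli directions gives Lam rho = sum_{i<n} alpha_i0 (2 d_i + 2 b_i 'X)^N.
   For the Dicke projector, Lam D_{N,m} has degree exactly 2m (when 2m <= N).
   Finally, a sum of n N-th powers of linear polynomials of degree <= N - n is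
   constant (proved with the operator p |-> (a + b'X) p' - N b p, which kills
   (a + b'X)^N and preserves the size of any polynomial of degree < N), so
   2m <= N - n would force 2m = 0. *)

Lemma size_gt_coef (R : nzRingType) (p : {poly R}) i : p`_i != 0 -> (i < size p)%N.
Proof. by apply: contraR; rewrite -leqNgt => /leq_sizeP->. Qed.

Section PowerSums.
Variable R : numDomainType.

(* The operator (a + b 'X) d/dX - N b, annihilating (a + b 'X)^N. *)
Definition Dop (N : nat) (a b : R) (p : {poly R}) : {poly R} :=
  (a%:P + b *: 'X) * p^`() - (N%:R * b) *: p.

Lemma Dop_coef N (a b : R) (p : {poly R}) k :
  (Dop N a b p)`_k = a * (p`_k.+1 *+ k.+1) + b * (p`_k *+ k) - N%:R * b * p`_k.
Proof.
rewrite /Dop coefB coefZ mulrDl coefD coefCM -scalerAl coefZ coefXM coef_deriv.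
by case: k => [|k] /=; rewrite ?mulr0n ?mulr0 -?mulrA ?coef_deriv.
Qed.

Lemma Dop_sum (I : Type) (r : seq I) N a b (la : I -> R) (F : I -> {poly R}) :
  Dop N a b (\sum_(i <- r) la i *: F i) = \sum_(i <- r) la i *: Dop N a b (F i).
Proof.
elim: r => [|i r IH]; first by rewrite !big_nil /Dop deriv0 mulr0 scaler0 subr0.
rewrite !big_cons -IH /Dop derivD derivZ mulrDr scalerDr -scalerAr scalerBr !scalerA.
by rewrite [la i * _]mulrC addrACA opprD.
Qed.

Lemma Dop_pow N (a b a' b' : R) :
  Dop N.+1 a b ((a'%:P + b' *: 'X) ^+ N.+1) =
  (N.+1%:R * (a * b' - b * a')) *: (a'%:P + b' *: 'X) ^+ N.
Proof.
rewrite /Dop deriv_exp derivD derivC derivZ derivX /= exprS.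
rewrite add0r alg_polyC -!mul_polyC !(rmorphM, rmorphB) /= polyC_natr.
ring.
Qed.

(* For b <> 0, Dop preserves the size of polynomials of degree < N: the
   leading coefficient p_d is multiplied by b (d - N) <> 0. *)
Lemma size_Dop N (a b : R) (p : {poly R}) :
  b != 0 -> (size p <= N)%N -> size (Dop N a b p) = size p.
Proof.
move=> b0 spN; have [->|p0] := eqVneq p 0.
  by rewrite /Dop deriv0 mulr0 scaler0 subr0.
have sp_gt0 : (0 < size p)%N by rewrite lt0n size_poly_eq0.
set d := (size p).-1; have sp : size p = d.+1 by rewrite prednK.
have above k : (size p <= k)%N -> (Dop N a b p)`_k = 0.
  move=> pk; rewrite Dop_coef !(leq_sizeP _ _ (leqnn (size p))) ?(leq_trans pk) //.
  by rewrite !mul0rn !mulr0 subr0 addr0.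
have lead : (Dop N a b p)`_d = b * p`_d * (d%:R - N%:R).
  rewrite Dop_coef (leq_sizeP _ _ (leqnn (size p))) ?sp // mul0rn mulr0 add0r.
  by rewrite -mulr_natr; ring.
apply/eqP; rewrite eqn_leq; apply/andP; split.
  by apply/leq_sizeP => k; apply: above.
rewrite sp; apply: size_gt_coef; rewrite lead !mulf_neq0 // -?lead_coefE ?lead_coef_eq0 //.
by rewrite subr_eq0 eqr_nat; apply/eqP; lia.
Qed.

Lemma pow_sum_eq0 (I : Type) (r : seq I) (N : nat) (la a b : I -> R) :
  all (fun i => b i != 0) r ->
  (size r + size (\sum_(i <- r) la i *: ((a i)%:P + b i *: 'X) ^+ N)%R <= N.+1)%N ->
  \sum_(i <- r) la i *: ((a i)%:P + b i *: 'X) ^+ N = 0.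
Proof.
elim: r N la => [|i r IH] N la; first by rewrite big_nil.
move=> /= /andP [bi0 br0] Hsize; set h := (\sum_(j <- i :: r) _)%R in Hsize *.
apply/eqP; rewrite -size_poly_eq0; case: N @h Hsize => [|N] h Hsize.
  by rewrite addSn ltnS leqn0 addn_eq0 in Hsize; case/andP: Hsize.
rewrite addSn ltnS in Hsize.
have DopE : Dop N.+1 (a i) (b i) h =
    \sum_(j <- r) (la j * (N.+1%:R * (a i * b j - b i * a j))) *:
                  ((a j)%:P + b j *: 'X) ^+ N.
  rewrite /h Dop_sum big_cons Dop_pow [b i * a i]mulrC subrr mulr0 scale0r.
  by rewrite scaler0 add0r; apply: eq_bigr => j _; rewrite Dop_pow scalerA.
have szD : size (Dop N.+1 (a i) (b i) h) = size h.
  by rewrite size_Dop // (leq_trans (leq_addl _ _) Hsize).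
suff D0 : Dop N.+1 (a i) (b i) h = 0 by rewrite -szD D0 size_poly0.
by rewrite DopE; apply: IH => //; rewrite -DopE szD.
Qed.

(* Allowing b_i = 0: n powers summing to a polynomial of degree <= N - n
   give a constant polynomial, since the b_i = 0 terms are constants. *)
Lemma pow_sum_const (n N : nat) (la a b : 'I_n -> R) (p : {poly R}) :
  p = \sum_(i < n) la i *: ((a i)%:P + b i *: 'X) ^+ N ->
  (n + size p <= N.+1)%N -> (size p <= 1)%N.
Proof.
move=> ->{p} Hsize; set p := (\sum_(i < n) _)%R in Hsize *.
have [->|p0] := eqVneq p 0; first by rewrite size_poly0.
pose C := \sum_(i < n | b i == 0) la i *: ((a i)%:P + b i *: 'X) ^+ N.
have sizeC : (size C <= 1)%N.
  suff -> : C = (\sum_(i < n | b i == 0) la i * a i ^+ N)%:P.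
    by rewrite size_polyC leq_b1.
  rewrite rmorph_sum; apply: eq_bigr => i /eqP->.
  by rewrite scale0r addr0 -rmorphXn -mul_polyC rmorphM.
pose rs := [seq i <- enum 'I_n | b i != 0].
have split_p : p = C + \sum_(i <- rs) la i *: ((a i)%:P + b i *: 'X) ^+ N.
  rewrite /p (bigID (fun i => b i == 0)) /= big_filter big_enum_cond /=.
  by congr (_ + _); apply: eq_bigl => i; rewrite mem_index_enum.
suff rs0 : \sum_(i <- rs) la i *: ((a i)%:P + b i *: 'X) ^+ N = 0.
  by rewrite split_p rs0 addr0.
apply: pow_sum_eq0; first by apply/allP => i; rewrite mem_filter => /andP[].
have size_rs : (size rs <= n)%N.
  by rewrite size_filter (leq_trans (count_size _ _)) // size_enum_ord.
have size_sum : (size (p - C)%R <= size p)%N.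
  rewrite (leq_trans (size_polyD _ _)) // size_polyN geq_max leqnn (leq_trans sizeC) //.
  by rewrite lt0n size_poly_eq0.
have -> : \sum_(i <- rs) la i *: ((a i)%:P + b i *: 'X) ^+ N = p - C.
  by rewrite split_p [C + _]addrC addrK.
by rewrite (leq_trans _ Hsize) // leq_add.
Qed.

End PowerSums.

Definition zeta (u v : 'I_2) : {poly algC} :=
  if u == v then (if val u == 0%N then 1 else -1) else 'X.

Definition zprod {N : nat} (x y : basis N) : {poly algC} :=
  \prod_(k < N) zeta (x k) (y k).

Definition Lam {N : nat} (O : qop N) : {poly algC} :=
  \sum_(x : basis N) \sum_(y : basis N) O x y *: zprod x y.

(* Its single-qubit version: (A00 - A11) + (A01 + A10) 'X. *)
Definition evA (A : 'M[algC]_2) : {poly algC} :=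
  \sum_(u : 'I_2) \sum_(v : 'I_2) A u v *: zeta u v.

Section GeneratingPolynomial.
Variable N : nat.

Lemma Lam_ext (O O' : qop N) : (forall x y, O x y = O' x y) -> Lam O = Lam O'.
Proof. by move=> E; apply: eq_bigr => x _; apply: eq_bigr => y _; rewrite E. Qed.

Lemma Lam_sum (I : Type) (r : seq I) (P : pred I) (O : I -> qop N) :
  Lam (fun x y => \sum_(i <- r | P i) O i x y) = \sum_(i <- r | P i) Lam (O i).
Proof.
rewrite /Lam; under eq_bigr do under eq_bigr do rewrite scaler_suml.
by under eq_bigr do rewrite exchange_big; rewrite exchange_big.
Qed.

Lemma Lam_scale (a : algC) (O : qop N) : Lam (fun x y => a * O x y) = a *: Lam O.
Proof.
rewrite /Lam scaler_sumr; apply: eq_bigr => x _; rewrite scaler_sumr.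
by apply: eq_bigr => y _; rewrite scalerA.
Qed.

(* Lam is multiplicative on tensor products (distributivity of sum/product). *)
Lemma Lam_tensor (B : 'I_N -> 'M[algC]_2) :
  Lam (tensor N B) = \prod_(k < N) evA (B k).
Proof.
rewrite /evA (bigA_distr_bigA (fun k u => \sum_(v : 'I_2) B k u v *: zeta u v)).
apply: eq_bigr => x _; rewrite (bigA_distr_bigA (fun k v => B k (x k) v *: zeta (x k) v)).
apply: eq_bigr => y _; rewrite /tensor /zprod -mul_polyC rmorph_prod -big_split /=.
by apply: eq_bigr => k _; rewrite mul_polyC.
Qed.

End GeneratingPolynomial.

Lemma evA1 : evA 1%:M = 0.
Proof.
rewrite /evA !big_ord_recl !big_ord0 /= !mxE /zeta /=.
by rewrite alg_polyC !scale1r !scale0r !add0r !addr0 subrr.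
Qed.

(* The sigma_Y component drops out: its off-diagonal entries -i and i cancel. *)
Lemma evA_pauli b c d : evA (pauli_comb b c d) = (2 * d)%:P + (2 * b) *: 'X.
Proof.
rewrite /evA !big_ord_recl !big_ord0 /= /pauli_comb !mxE /zeta /=.
rewrite alg_polyC -!mul_polyC !(rmorphD, rmorphM, rmorphN, rmorph0, rmorph1) /=.
ring.
Qed.

(* Every placement with an identity factor is killed by evA 1 = 0. *)
Lemma Lam_sym N j A : Lam (sym_sum N j A) = if j == 0%N then evA A ^+ N else 0.
Proof.
rewrite (Lam_sum _ _ _ _
  (fun S : {set 'I_N} => tensor N (fun k => if k \in S then 1%:M else A))).
under eq_bigr => S _ do rewrite Lam_tensor.
have [->|j0] := eqVneq j 0%N.
  rewrite (eq_bigl (pred1 set0)) => [|S]; last by rewrite cards_eq0.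
  rewrite big_pred1_eq (eq_bigr (fun _ => evA A)) ?prodr_const ?card_ord // => k _.
  by rewrite inE.
apply: big1 => S cardS; have /set0Pn [k kS] : S != set0.
  by rewrite -cards_eq0 (eqP cardS).
by rewrite (bigD1 k) //= kS evA1 mul0r.
Qed.

Lemma Lam_pauli_decomposition N n (b c d : 'I_n -> algC)
    (alpha : 'I_n -> 'I_N.+1 -> algC) :
  Lam (fun x y => \sum_(i < n) \sum_(j < N.+1)
         alpha i j * sym_sum N j (pauli_comb (b i) (c i) (d i)) x y) =
  \sum_(i < n) alpha i ord0 *: ((2 * d i)%:P + (2 * b i) *: 'X) ^+ N.
Proof.
rewrite (Lam_sum _ _ _ _ (fun i x y => \sum_(j < N.+1)
           alpha i j * sym_sum N j (pauli_comb (b i) (c i) (d i)) x y)).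
apply: eq_bigr => i _.
rewrite (Lam_sum _ _ _ _
  (fun j x y => alpha i j * sym_sum N j (pauli_comb (b i) (c i) (d i)) x y)).
rewrite big_ord_recl Lam_scale Lam_sym evA_pauli big1 ?addr0 // => j _.
by rewrite Lam_scale Lam_sym scaler0.
Qed.

Definition tc {N : nat} (x y : basis N) : nat := (\sum_(k < N) (x k != y k))%N.
Definition ec {N : nat} (x y : basis N) : nat :=
  (\sum_(k < N) ((x k == y k) && (val (x k) == 1%N)))%N.

Lemma zetaE u v : zeta u v = (-1) ^+ ((u == v) && (val u == 1%N)) * 'X ^+ (u != v).
Proof.
rewrite /zeta; case: u => [[|[|?]] ?] //; case: v => [[|[|?]] ?] //=;
  by rewrite ?expr0 ?expr1 ?mulr1 ?mul1r.
Qed.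

Lemma zprodE N (x y : basis N) : zprod x y = ((-1) ^+ ec x y)%:P * 'X ^+ tc x y.
Proof.
rewrite /zprod (eq_bigr _ (fun k _ => zetaE (x k) (y k))) big_split /= !prodrXr.
by rewrite rmorphXn rmorphN rmorph1.
Qed.

Lemma hweightE N (x : basis N) : hweight x = (\sum_(k < N) (val (x k) == 1%N))%N.
Proof.
rewrite /hweight -sum1_card big_mkcond /=; apply: eq_bigr => k _; rewrite inE.
by case: (_ == _).
Qed.

(* Each position with x k = y k = 1 counts twice in the weights. *)
Lemma tc_ec N (x y : basis N) : (tc x y + 2 * ec x y = hweight x + hweight y)%N.
Proof.
rewrite /tc /ec !hweightE big_distrr -!big_split /=; apply: eq_bigr => k _.
by case: (x k) => [[|[|?]] ?] //; case: (y k) => [[|[|?]] ?].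
Qed.

Definition interval_str (N a b : nat) : basis N :=
  [ffun k : 'I_N => if (a <= k < b)%N then @Ordinal 2 1 isT else ord0].

Lemma hweight_interval N a b :
  (a <= b <= N)%N -> hweight (interval_str N a b) = (b - a)%N.
Proof.
move=> /andP [ab bN]; rewrite hweightE.
have cnt n : (\sum_(k < n) ((a <= k < b)%N : nat) = minn b n - minn a n)%N.
  elim: n => [|n IH]; first by rewrite big_ord0 !minn0.
  by rewrite big_ord_recr /= IH; case: (leqP a n) => an; case: (ltnP n b) => nb /=; lia.
rewrite (eq_bigr (fun k : 'I_N => ((a <= k < b)%N : nat))) ?cnt; first by lia.
by move=> k _; rewrite ffunE; case: ifP.
Qed.

Section DickePolynomial.
Variables (N m : nat).
Hypotheses (m_gt0 : (0 < m)%N) (m2_le_N : (2 * m <= N)%N).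

(* |r|^2 with r = C(N,m)^{-1/2} the Dicke amplitude. *)
Let c : algC := (sqrtC ('C(N, m))%:R)^-1 * ((sqrtC ('C(N, m))%:R)^-1)^*.

Lemma Lam_dicke_coef k : (Lam (dicke_proj N m))`_k =
  c * \sum_(x : basis N) \sum_(y : basis N)
        (if (hweight x == m) && (hweight y == m) then (zprod x y)`_k else 0).
Proof.
rewrite /Lam coef_sum mulr_sumr; apply: eq_bigr => x _.
rewrite coef_sum mulr_sumr; apply: eq_bigr => y _.
rewrite coefZ /dicke_proj /dicke_vec /c.
by case: (hweight x == m); case: (hweight y == m); rewrite /= ?(mul0r, conjC0, mulr0).
Qed.

(* For weight-m strings, zprod x y has degree tc x y = 2m - 2 ec x y <= 2m,
   with coefficient 1 at 2m exactly when x and y have disjoint supports. *)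
Lemma zprod_coef (x y : basis N) k :
  hweight x = m -> hweight y = m -> (2 * m <= k)%N ->
  (zprod x y)`_k = ((k == 2 * m) && (tc x y == 2 * m))%N%:R.
Proof.
move=> hx hy mk; have := tc_ec _ x y; rewrite hx hy zprodE coefCM coefXn => E.
have [ktc|ktc] := eqVneq k (tc x y); last first.
  rewrite mulr0; case: (k =P 2 * m)%N => //= km; case: eqP => // tm.
  by move/eqP: ktc; lia.
have tc2m : tc x y = (2 * m)%N by lia.
have ec0 : ec x y = 0%N by lia.
by rewrite ktc tc2m eqxx ec0 expr0 mul1r.
Qed.

(* Lam D_{N,m} has degree exactly 2m: its top coefficient counts the pairs of
   weight-m strings with disjoint supports, e.g. ones on [0,m) and on [m,2m). *)
Lemma size_Lam_dicke : size (Lam (dicke_proj N m)) = (2 * m).+1.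
Proof.
have c0 : c != 0.
  have r0 : (sqrtC ('C(N, m))%:R)^-1 != 0 :> algC.
    by rewrite invr_eq0 sqrtC_eq0 pnatr_eq0 -lt0n bin_gt0; lia.
  by rewrite mulf_neq0 // conjC_eq0.
have coefE k : (2 * m <= k)%N -> (Lam (dicke_proj N m))`_k =
  c * (\sum_(x : basis N) \sum_(y : basis N) ((hweight x == m) && (hweight y == m)
        && (k == 2 * m) && (tc x y == 2 * m))%N)%:R.
  move=> mk; rewrite Lam_dicke_coef natr_sum; congr (_ * _); apply: eq_bigr => x _.
  rewrite natr_sum; apply: eq_bigr => y _.
  by case: eqP => hx; case: eqP => hy //=; rewrite zprod_coef.
apply/eqP; rewrite eqn_leq; apply/andP; split.
  apply/leq_sizeP => k mk; rewrite coefE ?(ltnW mk) //.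
  rewrite big1 ?mulr0n ?mulr0 // => x _; rewrite big1 // => y _.
  by rewrite (gtn_eqF mk) !andbF.
apply: size_gt_coef; rewrite coefE // mulf_eq0 (negPf c0) pnatr_eq0 -lt0n /=.
pose x0 := interval_str N 0 m; pose y0 := interval_str N m (2 * m).
have hx0 : hweight x0 = m by rewrite hweight_interval ?subn0 //; lia.
have hy0 : hweight y0 = m by rewrite hweight_interval; lia.
have ec0 : ec x0 y0 = 0%N.
  rewrite /ec big1 // => k _; rewrite !ffunE.
  by case: (ltnP k m) => km /=; rewrite ?andbF.
have tc0 : tc x0 y0 = (2 * m)%N by have := tc_ec _ x0 y0; rewrite hx0 hy0 ec0; lia.
rewrite (bigD1 x0) //= (bigD1 y0) //= hx0 hy0 tc0 !eqxx /=; lia.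
Qed.

End DickePolynomial.

Theorem theorem5 (N m : nat) :
  (1 <= N)%N -> (1 <= m <= N)%N ->
  forall (n : nat) (b c d : 'I_n -> algC) (alpha : 'I_n -> 'I_N.+1 -> algC),
    (forall i, b i \is Num.real) ->
    (forall i, c i \is Num.real) ->
    (forall i, d i \is Num.real) ->
    (forall i j, alpha i j \is Num.real) ->
    (forall x y : basis N,
       dicke_proj N m x y =
       \sum_(i < n) \sum_(j < N.+1)
          alpha i j * sym_sum N j (pauli_comb (b i) (c i) (d i)) x y) ->
    (N%:Z - 2 * m%:Z + 1 <= n%:Z)%R.
Proof.
(* If n + 2m <= N, Lam D_{N,m} would be a sum of n N-th powers of degree 2m,
   hence constant by pow_sum_const; but its degree is 2m > 0. *)
move=> _ /andP [m_gt0 _] n b c d alpha _ _ _ _ decomp.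
have [|le_bound] := ltnP N (n + 2 * m); first by lia.
have size_D := size_Lam_dicke N m m_gt0 (leq_trans (leq_addl n _) le_bound).
suff : (size (Lam (dicke_proj N m)) <= 1)%N.
  by rewrite size_D ltnS leqn0 muln_eq0 /= eqn0Ngt m_gt0.
apply: (pow_sum_const _ _ N (fun i => alpha i ord0)
                      (fun i => 2 * d i) (fun i => 2 * b i)).
  by rewrite (Lam_ext _ _ _ decomp); apply: Lam_pauli_decomposition.
by rewrite size_D addnS ltnS.
Qed.
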